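(* Let $n\ge2$, $P_{n-1}(\lambda)=\mu_1\cdots\mu_n$ with $\mu_i=\sum_{j\neq i}\lambda_j$, $\mathcal P_{n-1}=\{\lambda\in\mathbb R^n:\mu_i>0\ \forall i\}$, and $f(\lambda)=\log P_{n-1}(\lambda)$ on $\mathcal P_{n-1}$. Let $\lambda,\underline\lambda\in\mathcal P_{n-1}$, write $\underline\mu_i=\sum_{j\ne i}\underline\lambda_j$, and let $\varepsilon>0$ with $\min_i\underline\mu_i\ge\varepsilon$. Suppose $\min_j\mu_j\le\frac{\varepsilon}{2n}$. Then $$\sum_{i=1}^n\frac1{\mu_i}\ge\frac{2n}{\varepsilon},\qquad \sum_{i=1}^nf_i(\lambda)(\underline\lambda_i-\lambda_i)\ge\frac{\varepsilon}{2}\sum_{i=1}^n\frac1{\mu_i}=\frac{\varepsilon}{2(n-1)}\sum_{i=1}^nf_i(\lambda),$$ where $f_i=\partial f/\partial\lambda_i$. *)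

From HB Require Import structures.
From mathcomp Require Import all_boot all_order all_algebra.
From mathcomp Require Import all_classical all_reals all_analysis.
Set Implicit Arguments. Unset Strict Implicit. Unset Printing Implicit Defensive.
Import Order.TTheory GRing.Theory Num.Theory.
Import numFieldNormedType.Exports.
Local Open Scope ring_scope.

(* A point lambda of R^n is a row vector 'rV[R]_n; lambda_j = l ord0 j. *)

Definition mu {R : realType} {n : nat} (l : 'rV[R]_n) (i : 'I_n) : R :=
  \sum_(j < n | j != i) l ord0 j.

Definition Pn1 {R : realType} {n : nat} (l : 'rV[R]_n) : R :=
  \prod_(i < n) mu l i.

Definition in_cone {R : realType} {n : nat} (l : 'rV[R]_n) : Prop :=
  forall i : 'I_n, 0 < mu l i.

Definition f {R : realType} {n : nat} (l : 'rV[R]_n) : R := ln (Pn1 l).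

Definition fpart {R : realType} {n : nat} (i : 'I_n) (l : 'rV[R]_n) : R :=
  'D_(delta_mx 0 i) f l.

(* On the cone f = sum_k ln mu_k with every mu_k linear in lambda, so
   'D_v f lambda = sum_k mu_k(v) / mu_k(lambda).  Taking v = e_i gives
   f_i = sum_k 1/mu_k - 1/mu_i, whence sum_i f_i = (n - 1) sum_k 1/mu_k.  Taking
   v = ul - l gives sum_i f_i (ul_i - l_i) = sum_k (mu_k(ul) - mu_k(l)) / mu_k(l),
   which is at least eps sum_k 1/mu_k - n.  The single term 1/mu_j >= 2n/eps
   shows that n is at most half of eps sum_k 1/mu_k. *)

From HB Require Import structures.
From mathcomp Require Import all_boot all_order all_algebra.
From mathcomp Require Import all_classical all_reals all_analysis.
From mathcomp Require Import ring lra.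
Set Implicit Arguments. Unset Strict Implicit. Unset Printing Implicit Defensive.
Import Order.TTheory GRing.Theory Num.Theory.
Import numFieldNormedType.Exports.
Local Open Scope ring_scope.

Section Mu.
Variables (R : realType) (n : nat).
Implicit Types (a b l : 'rV[R]_n) (i k : 'I_n).

Lemma muD a b k : mu (a + b) k = mu a k + mu b k.
Proof. by rewrite /mu -big_split; apply: eq_bigr => j _; rewrite mxE. Qed.

Lemma muZ (h : R) a k : mu (h *: a) k = h * mu a k.
Proof. by rewrite /mu mulr_sumr; apply: eq_bigr => j _; rewrite mxE. Qed.

Lemma muB a b k : mu (a - b) k = mu a k - mu b k.
Proof. by rewrite muD -scaleN1r muZ mulN1r. Qed.

Lemma muE a k : mu a k = \sum_j a ord0 j - a ord0 k.
Proof. by rewrite /mu [X in _ = X - _](bigD1 k) //= addrC addrK. Qed.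

Lemma mu_delta i k : mu (delta_mx 0 i : 'rV[R]_n) k = 1 - (k == i)%:R.
Proof.
rewrite /mu (eq_bigr (fun j => (j == i)%:R)) => [|j _]; last by rewrite mxE.
have [->|ki] := eqVneq k i.
  by rewrite subrr big1 // => j /negbTE ->.
by rewrite subr0 (bigD1 i) 1?eq_sym //= eqxx big1 ?addr0 // => j /andP[_ /negbTE ->].
Qed.

End Mu.

Lemma ln_prod (R : realType) (I : Type) (r : seq I) (F : I -> R) :
  (forall k, 0 < F k) -> ln (\prod_(k <- r) F k) = \sum_(k <- r) ln (F k).
Proof.
move=> F_gt0; elim: r => [|a r IHr]; first by rewrite !big_nil ln1.
rewrite !big_cons lnM ?IHr // posrE //.
by apply: prodr_gt0 => k _.
Qed.

Lemma derive_along_line (R : numFieldType) (V W : normedModType R)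
    (F : V -> W) (x v : V) :
  'D_v F x = 'D_1 (fun h : R => F (h *: v + x)) 0.
Proof.
rewrite /derive; do 2 f_equal; apply/funext => h.
by rewrite /comp /shift scale0r add0r addr0 [h *: 1]mulr1 addrC.
Qed.

Lemma is_derive_ln_affine (R : realType) (a b : R) : 0 < a ->
  is_derive (0 : R) 1 (fun h : R => ln (a + h * b)) (b / a).
Proof.
move=> a_gt0.
have lin : is_derive (0 : R) 1 (fun h : R => a + h * b) b.
  apply: is_derive_eq (is_deriveD (is_derive_cst a (0 : R) 1)
    (is_deriveM (is_derive_id (0 : R) 1) (is_derive_cst b (0 : R) 1))) _.
  by rewrite scaler0 !add0r -[RHS]mulr1.
have ln' : is_derive (a + 0 * b) 1 (@ln R) a^-1.
  by rewrite mul0r addr0; exact: is_derive1_ln.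
by rewrite mulrC; exact: (@is_derive1_comp R (@ln R) _ 0 _ _ ln' lin).
Qed.

Lemma near0_affine_gt0 (R : realFieldType) (a b : R) : 0 < a ->
  \forall h \near (0 : R), 0 < a + h * b.
Proof.
move=> a_gt0.
have cvg_ab : ((fun h : R => a + h * b) @ (0 : R) --> a + 0 * b)%classic.
  by apply: cvgD; [exact: cvg_cst | apply: cvgM; [exact: cvg_id | exact: cvg_cst]].
by apply: (cvgr_gt _ cvg_ab); rewrite mul0r addr0.
Qed.

Section LogOnCone.
Variables (R : realType) (n : nat) (l : 'rV[R]_n).
Hypothesis l_cone : in_cone l.
Let S := \sum_(k < n) (mu l k)^-1.

Lemma derive_f (v : 'rV[R]_n) : 'D_v f l = \sum_k mu v k / mu l k.
Proof.
have f_line : \forall h \near (0 : R),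
    f (h *: v + l) = (\sum_k (fun h => ln (mu l k + h * mu v k))) h.
  have : \forall h \near (0 : R), forall k, 0 < mu l k + h * mu v k.
    by apply: (@filter_forall _ _ _ (nbhs (0 : R))) => k; exact: near0_affine_gt0.
  apply: filterS => h line_cone.
  rewrite /f /Pn1 fct_sumE ln_prod => [|k]; last by rewrite muD muZ addrC.
  by apply: eq_bigr => k _; rewrite muD muZ addrC.
rewrite derive_along_line (near_eq_derive _ f_line).
have := is_derive_sum (fun k => is_derive_ln_affine (mu v k) (l_cone k)).
by move=> D; apply: derive_val.
Qed.

Lemma fpartE i : fpart i l = S - (mu l i)^-1.
Proof.
rewrite /fpart derive_f; under eq_bigr do rewrite mu_delta mulrBl mul1r.
rewrite sumrB; congr (_ - _).
by rewrite (bigD1 i) //= eqxx mul1r big1 ?addr0 // => k /negbTE ->; rewrite mul0r.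
Qed.

Lemma sum_fpartM (v : 'rV[R]_n) : \sum_i fpart i l * v ord0 i = 'D_v f l.
Proof.
rewrite derive_f; under eq_bigr do rewrite fpartE mulrBl.
under [RHS]eq_bigr do rewrite muE mulrBl.
rewrite !sumrB -!mulr_sumr mulrC.
by under [X in _ - X = _]eq_bigr do rewrite mulrC.
Qed.

Lemma sum_fpart : \sum_i fpart i l = (n%:R - 1) * S.
Proof.
rewrite (eq_bigr _ (fun i _ => fpartE i)).
by rewrite sumrB sumr_const card_ord mulrBl mul1r mulr_natl.
Qed.

Lemma inv_le_sum_inv_mu j (c : R) : mu l j <= c -> c^-1 <= S.
Proof.
move=> le_c; rewrite /S (bigD1 j) //=.
apply: le_trans (_ : (mu l j)^-1 <= _).
  by rewrite lef_pV2 ?posrE // (lt_le_trans (l_cone j)).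
by rewrite lerDl sumr_ge0 // => k _; rewrite invr_ge0 ltW.
Qed.

Lemma derive_f_toward_ge (ul : 'rV[R]_n) (eps : R) :
  (forall k, eps <= mu ul k) -> eps * S - n%:R <= 'D_(ul - l) f l.
Proof.
move=> ul_ge; rewrite derive_f.
have -> : eps * S - n%:R = \sum_k (eps / mu l k - 1).
  by rewrite sumrB mulr_sumr sumr_const card_ord.
apply: ler_sum => k _.
by rewrite muB mulrBl divff ?gt_eqF // lerD2r ler_pM2r ?invr_gt0.
Qed.

End LogOnCone.

Theorem lemma3p1 (R : realType) (n : nat) (hn : (2 <= n)%N)
  (l ul : 'rV[R]_n) (eps : R)
  (hl : in_cone l) (hul : in_cone ul) (heps : 0 < eps)
  (hmin_ul : forall i : 'I_n, eps <= mu ul i)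
  (hmin_l : exists j : 'I_n, mu l j <= eps / (2 * n%:R)) :
  [/\ 2 * n%:R / eps <= \sum_(i < n) (mu l i)^-1,
      \sum_(i < n) fpart i l * (ul ord0 i - l ord0 i)
        >= eps / 2 * \sum_(i < n) (mu l i)^-1
    & eps / 2 * \sum_(i < n) (mu l i)^-1
        = eps / (2 * (n%:R - 1)) * \sum_(i < n) fpart i l ].
Proof.
set S := \sum_(i < n) (mu l i)^-1.
have n_ge2 : 2 <= n%:R :> R by rewrite (ler_nat R 2 n).
have S_ge : 2 * n%:R / eps <= S.
  by case: hmin_l => j /(inv_le_sum_inv_mu hl); rewrite invf_div.
split => //.
- have -> : \sum_i fpart i l * (ul ord0 i - l ord0 i) = 'D_(ul - l) f l.
    by rewrite -sum_fpartM //; apply: eq_bigr => i _; rewrite !mxE.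
  have := derive_f_toward_ge hl hmin_ul.
  have : 2 * n%:R <= eps * S by rewrite -ler_pdivrMl // mulrC.
  rewrite -/S; lra.
- by rewrite sum_fpart // -/S; field; lra.
Qed.
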